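(* Let $g:\mathbb{R}\to[0,1]$ be measurable, even ($g(-x)=g(x)$) and $\pi$-periodic ($g(x+\pi)=g(x)$). For positive integers $m,n$ let $\mu=\pi/n$ and $$\tilde{G}(m,n)=\frac{1}{\pi}\int_{-\pi/2}^{\pi/2}\prod_{i=0}^{n-1} g(x+mi\mu)\,dx.$$ Then for all positive integers $m,n$, $\tilde{G}(m,n)\ge \tilde{G}(1,n)$.
   Context: $g(x)$ is the probability of not detecting a target (with rectangular symmetry) observed at angle $x$; $\tilde G(m,n)$ is the average probability of no detection over a uniformly distributed target orientation when $n$ independent observations are made at angles separated consecutively by $m\pi/n$. *)

From HB Require Import structures.
From mathcomp Require Import all_boot all_order all_algebra.
From mathcomp Require Import all_classical all_reals all_analysis.
Set Implicit Arguments. Unset Strict Implicit. Unset Printing Implicit Defensive.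
Import Order.TTheory GRing.Theory Num.Theory.
Local Open Scope classical_set_scope.
Local Open Scope ring_scope.

Definition Gtilde (R : realType) (g : R -> R) (m n : nat) : \bar R :=
  let D : set R := `[- (pi / 2), pi / 2]%classic in
  let f : R -> R := fun x => \prod_(i < n) g (x + (m * i)%:R * (pi / n%:R)) in
  ((pi^-1)%:E * \int[@lebesgue_measure R]_(x in D) (f x)%:E)%E.

From HB Require Import structures.
From mathcomp Require Import all_boot all_order all_algebra.
From mathcomp Require Import all_classical all_reals all_analysis.
From mathcomp Require Import ring lra measurable_realfun.
Import Order.TTheory GRing.Theory Num.Theory.
Local Open Scope classical_set_scope.

(* Let d = gcd m n, n = d k and mu = pi / n, so that g has period n mu.  Modulo
   the period, the angles m i mu (i < n) run d times through the multiples
   d j mu (j < k), hence the integrand of G(m, n) is F^d with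
   F x = prod_(j < k) g (x + d j mu), while that of G(1, n) is
   prod_(s < d) F (x + s mu).  By AM-GM the latter is at most
   (1 / d) sum_(s < d) F (x + s mu)^d, and over a period of F each shifted
   power F (. + s mu)^d has the same integral as F^d. *)

Lemma coprime_divn_gcd (m n : nat) : 0 < gcdn m n ->
  coprime (m %/ gcdn m n) (n %/ gcdn m n).
Proof.
move=> d_gt0; rewrite /coprime.
have := div.muln_gcdl (m %/ gcdn m n) (n %/ gcdn m n) (gcdn m n).
rewrite !divnK ?dvdn_gcdl ?dvdn_gcdr // => e.
by rewrite -(eqn_pmul2r d_gt0) mul1n e.
Qed.

Lemma mulmod_inj (a k : nat) : coprime a k ->
  {in gtn k &, injective (fun s => a * s %% k)}.
Proof.
move=> co s t; rewrite !inE => s_lt t_lt.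
wlog st : s t s_lt t_lt / s <= t.
  by move=> H e; case: (leqP s t) => [|/ltnW] st; [|apply/esym]; apply: H.
move/esym/eqP; rewrite eqn_mod_dvd ?leq_mul2l ?st ?orbT // -mulnBr.
rewrite Gauss_dvdr 1?coprime_sym //.
have [/eqP|ts] := posnP (t - s).
  by rewrite subn_eq0 => ts _; apply/eqP; rewrite eqn_leq st.
by rewrite gtnNdvd // ltn_subLR // (leq_trans t_lt) // leq_addl.
Qed.

Local Open Scope ring_scope.

Lemma big_ord_mul_split {R : Type} {idx : R} (op : Monoid.com_law idx)
    (d k : nat) (F : nat -> R) :
  \big[op/idx]_(i < d * k) F i =
  \big[op/idx]_(s < d) \big[op/idx]_(r < k) F (s + d * r)%N.
Proof.
elim: k => [|k IH]; first by rewrite muln0 big_ord0 big1 // => s _; rewrite big_ord0.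
rewrite mulnS addnC big_split_ord /= IH.
under [RHS]eq_bigr do rewrite big_ord_recr /=.
by rewrite big_split /=; congr (op _ _); apply: eq_bigr => s _; rewrite addnC.
Qed.

Section PeriodicSampling.
Context {R : pzRingType} {S : comPzRingType} {g : R -> S} {mu : R} {n : nat}.
Hypothesis g_per : forall y, g (y + n%:R * mu) = g y.

Lemma periodic_natmul y q : g (y + (q * n)%:R * mu) = g y.
Proof.
elim: q => [|q IH]; first by rewrite mul0r addr0.
by rewrite mulSnr natrD mulrDl addrA g_per.
Qed.

Lemma periodic_modn x a : g (x + a%:R * mu) = g (x + (a %% n)%:R * mu).
Proof.
by rewrite {1}(divn_eq a n) natrD mulrDl addrCA addrC periodic_natmul addrC.
Qed.

Lemma prod_periodic_mul_coprime (m' d k : nat) (x : R) :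
  n = (k * d)%N -> coprime m' k -> (0 < k)%N ->
  \prod_(i < n) g (x + (m' * d * i)%:R * mu) =
  (\prod_(j < k) g (x + (d * j)%:R * mu)) ^+ d.
Proof.
move=> nE co k_gt0.
have sample_mod (s r : nat) : (m' * d * (s + k * r) %% n = d * (m' * s %% k))%N.
  rewrite nE (_ : m' * d * (s + k * r) = m' * r * (k * d) + m' * s * d)%N; last by ring.
  by rewrite modnMDl -muln_modl mulnC.
rewrite nE (big_ord_mul_split _ _ _ (fun i => g (x + (m' * d * i)%:R * mu))).
under eq_bigr => s _ do under eq_bigr => r _ do rewrite periodic_modn sample_mod.
under eq_bigr => s _ do rewrite prodr_const card_ord.
rewrite prodrXl; congr (_ ^+ _).
pose h (s : 'I_k) : 'I_k := Ordinal (ltn_pmod (m' * s) k_gt0).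
have h_inj : injective h.
  by move=> s t /(congr1 val) /mulmod_inj e; apply/val_inj/e; rewrite ?inE.
by rewrite [RHS](reindex_inj h_inj).
Qed.

Lemma prod_periodic_mul (m : nat) (x : R) : (0 < n)%N ->
  \prod_(i < n) g (x + (m * i)%:R * mu) =
  (\prod_(j < n %/ gcdn m n) g (x + (gcdn m n * j)%:R * mu)) ^+ gcdn m n.
Proof.
move=> n_gt0; set d := gcdn m n; set k := (n %/ d)%N.
have d_gt0 : (0 < d)%N by rewrite gcdn_gt0 n_gt0 orbT.
have nE : n = (k * d)%N by rewrite divnK // dvdn_gcdr.
have k_gt0 : (0 < k)%N by move: n_gt0; rewrite nE muln_gt0 => /andP[].
rewrite -{1}(divnK (dvdn_gcdl m n)) -/d.
exact: prod_periodic_mul_coprime nE (coprime_divn_gcd _ _ d_gt0) k_gt0.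
Qed.

Lemma prod_step_split (d k : nat) (x : R) : n = (d * k)%N ->
  \prod_(i < n) g (x + i%:R * mu) =
  \prod_(s < d) \prod_(j < k) g (x + s%:R * mu + (d * j)%:R * mu).
Proof.
move=> nE; rewrite nE (big_ord_mul_split _ _ _ (fun i => g (x + i%:R * mu))).
by apply: eq_bigr => s _; apply: eq_bigr => j _; rewrite natrD mulrDl addrA.
Qed.
End PeriodicSampling.

Section Translation.
Variable R : realType.
Local Notation mu := lebesgue_measure.
Local Open Scope ereal_scope.

Lemma measurable_addr (c : R) : measurable_fun [set: R] (fun x => x + c)%R.
Proof.
exact: measurable_realfun.measurable_funD (@measurable_id _ _ _) (measurable_cst _).
Qed.

(* The same map, with the codomain [pushforward] expects. *)
Let measurable_addrT (c : R) : measurable_fun [set: measurableTypeR R]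
  ((fun x => x + c)%R : _ -> measurableTypeR R) := measurable_addr c.

Lemma lebesgue_measure_shift (c : R) (A : set R) : measurable A ->
  pushforward mu ((fun x => x + c)%R : _ -> measurableTypeR R) A = mu A.
Proof.
move=> mA.
apply/esym/(@lebesgue_measure_unique R
  (measure_function_pushforward__canonical__measure_function_Measure
    mu (measurable_addrT c))) => //= _ [[a b]] _ <-.
rewrite /pushforward.
have -> : (fun x => x + c)%R @^-1` `]a, b] = `](a - c)%R, (b - c)%R]%classic.
  by apply/seteqP; split => x /=; rewrite !in_itv /= ?ltrBlDr ?lerBrDr.
rewrite !lebesgue_measure_itv /= !lte_fin ltrD2r.
by case: ifP => // _; congr (_%:E); rewrite opprB; lra.
Qed.

Lemma ge0_integral_shift (c : R) (B : set R) (h : R -> \bar R)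
    (mB : measurable B) (mh : measurable_fun setT h) (h0 : forall x, 0 <= h x) :
  \int[mu]_(x in (fun x => x + c)%R @^-1` B) h (x + c)%R = \int[mu]_(x in B) h x.
Proof.
rewrite -[LHS](@ge0_integral_pushforward _ _ _ _ _ _ (measurable_addrT c)) //=.
- by apply: eq_measure_integral => //= A mA _; exact/lebesgue_measure_shift.
- exact: measurable_funS mh.
Qed.

Lemma preimage_addr_itv_co (a b c : R) :
  (fun x => x + c)%R @^-1` `[(a + c)%R, (b + c)%R[ = `[a, b[%classic.
Proof. by apply/seteqP; split => x /=; rewrite !in_itv /= lerD2r ltrD2r. Qed.

Lemma ge0_integral_periodic_shift (p a c : R) (h : R -> \bar R)
    (mh : measurable_fun setT h) (h0 : forall x, 0 <= h x)
    (h_per : forall x, h (x + p)%R = h x) : (0 <= c < p)%R ->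
  \int[mu]_(x in `[a, (a + p)%R[) h (x + c)%R = \int[mu]_(x in `[a, (a + p)%R[) h x.
Proof.
(* Split at a + c: the part of [a + c, a + p + c[ beyond a + p is the
   p-translate of [a, a + c[. *)
move=> /andP[c_ge0 c_lt].
have disj (u v w : R) : [disjoint `[u, v[ & `[v, w[]%classic.
  apply/eqP/seteqP; split => // x /= [].
  by rewrite !in_itv /= => /andP[_ ?] /andP[? _]; lra.
have split_at (u v w : R) : (u <= v <= w)%R ->
    \int[mu]_(x in `[u, w[) h x =
    \int[mu]_(x in `[u, v[) h x + \int[mu]_(x in `[v, w[) h x.
  move=> /andP[uv vw]; rewrite -ge0_integral_setU //; last exact: measurable_funS mh.
  by rewrite (@itv_bndbnd_setU _ _ _ (BLeft v)) // bnd_simp.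
rewrite -[in LHS](preimage_addr_itv_co a (a + p) c) ge0_integral_shift //.
rewrite (split_at (a + c)%R (a + p)%R); last lra.
rewrite [X in _ = X](split_at a (a + c)%R); last lra.
rewrite addeC; congr (_ + _).
rewrite (addrAC a p c) -[LHS](ge0_integral_shift p) // preimage_addr_itv_co.
by apply: eq_integral => x _; rewrite h_per.
Qed.
End Translation.

Lemma AGM_prod_le_sum_pow (R : realFieldType) (d : nat) (a : 'I_d -> R) :
  (0 < d)%N -> (forall i, 0 <= a i) ->
  d%:R * \prod_i a i <= \sum_i a i ^+ d.
Proof.
move=> d_gt0 a_ge0.
have := leif_AGM (A := 'I_d) (E := fun i => a i ^+ d).
rewrite card_ord => /(_ (fun i _ => exprn_ge0 _ (a_ge0 i))) [+ _].
rewrite prodrXl ler_pXn2r //; last 2 first.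
- by rewrite nnegrE prodr_ge0.
- by rewrite nnegrE divr_ge0 // sumr_ge0 // => i _; rewrite exprn_ge0.
by rewrite ler_pdivlMr ?ltr0n // mulrC.
Qed.

Section ShiftedProducts.
Variable R : realType.
Local Notation mu := lebesgue_measure.
Local Open Scope ereal_scope.

Lemma ge0_integral_prod_shift_le_pow (F : R -> R) (p a : R) (d : nat) (c : 'I_d -> R)
    (mF : measurable_fun setT F) (F_ge0 : forall x, (0 <= F x)%R)
    (F_per : forall x, F (x + p)%R = F x) :
  (0 < d)%N -> (forall s, (0 <= c s < p)%R) ->
  \int[mu]_(x in `[a, (a + p)%R]) (\prod_s F (x + c s)%R)%:E <=
  \int[mu]_(x in `[a, (a + p)%R]) (F x ^+ d)%:E.
Proof.
move=> d_gt0 c_itv.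
have mFc (e : R) : measurable_fun setT (fun x : R => F (x + e)%R).
  exact: measurableT_comp mF (measurable_addr _ e).
have mprod : measurable_fun setT (fun x : R => (\prod_s F (x + c s)%R)%:E).
  by apply/measurable_EFinP; apply: measurable_prod => s _; exact: mFc.
have mpow (e : R) : measurable_fun setT (fun x : R => (F (x + e)%R ^+ d)%:E).
  by apply/measurable_EFinP; apply: measurable_funX; exact: mFc.
have mpow0 : measurable_fun setT (fun x : R => (F x ^+ d)%:E).
  by apply: eq_measurable_fun (mpow 0%R) => x _; rewrite addr0.
rewrite -!integral_itv_bndo_bndc; try exact: measurable_funS mprod;
  last exact: measurable_funS mpow0.
rewrite -(@lee_pmul2l _ d%:R%:E) ?lte_fin ?ltr0n // -ge0_integralZl //; first last.
- by move=> x _; rewrite lee_fin prodr_ge0.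
- exact: measurable_funS mprod.
apply: (@le_trans _ _ (\int[mu]_(x in `[a, (a + p)%R[) (\sum_s F (x + c s)%R ^+ d)%:E)).
  apply: ge0_le_integral => //.
  - by move=> x _; rewrite -EFinM lee_fin mulr_ge0 ?prodr_ge0.
  - by apply: emeasurable_funM => //; exact: measurable_funS mprod.
  - apply/measurable_EFinP/measurable_sum => s; apply: measurable_funX.
    exact: measurable_funS (mFc (c s)).
  - by move=> x _; rewrite -EFinM lee_fin AGM_prod_le_sum_pow.
under eq_integral do rewrite -sumEFin.
rewrite ge0_integral_sum //; last 2 first.
- by move=> s; exact: measurable_funS (mpow (c s)).
- by move=> s x _; rewrite lee_fin exprn_ge0.
rewrite (eq_bigr (fun=> \int[mu]_(x in `[a, (a + p)%R[) (F x ^+ d)%:E)).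
  by rewrite sumr_const card_ord mule_natl.
move=> s _; apply: (ge0_integral_periodic_shift _ _ _ _ (fun x => (F x ^+ d)%:E)) => //.
- by move=> x; rewrite lee_fin exprn_ge0.
- by move=> x; rewrite F_per.
Qed.
End ShiftedProducts.

Theorem theorem4p2 (R : realType) (g : R -> R)
  (g_meas : measurable_fun setT g)
  (g_01 : forall x, 0 <= g x <= 1)
  (g_even : forall x, g (- x) = g x)
  (g_per : forall x, g (x + pi) = g x)
  (m n : nat) (m_pos : (0 < m)%N) (n_pos : (0 < n)%N) :
  (Gtilde g 1 n <= Gtilde g m n)%E.
Proof.
pose d := gcdn m n; pose k := (n %/ d)%N.
have d_gt0 : (0 < d)%N by rewrite gcdn_gt0 m_pos.
have nE : n = (d * k)%N by rewrite mulnC divnK // dvdn_gcdr.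
have d_le_n : (d <= n)%N by rewrite dvdn_leq // dvdn_gcdr.
rewrite /Gtilde /=; apply: lee_wpmul2l; first by rewrite lee_fin invr_ge0 pi_ge0.
set mu := pi / n%:R.
have g_step y : g (y + n%:R * mu) = g y.
  by rewrite /mu mulrCA divff ?mulr1 ?pnatr_eq0 -?lt0n.
pose F x := \prod_(j < k) g (x + (d * j)%:R * mu).
set a := - (pi / 2); have -> : pi / 2 = a + pi by rewrite /a; lra.
rewrite [X in (_ <= X)%E](eq_integral (fun x : measurableTypeR R => (F x ^+ d)%:E));
  last by move=> x _; rewrite (prod_periodic_mul g_step).
rewrite [X in (X <= _)%E](eq_integral
    (fun x : measurableTypeR R => (\prod_(s < d) F (x + s%:R * mu))%:E)); last first.
  by move=> x _; under eq_bigr do rewrite mul1n; rewrite (prod_step_split d k).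
apply: (ge0_integral_prod_shift_le_pow _ _ _ _ _ (fun s : 'I_d => s%:R * mu)) => //.
- apply: measurable_prod => j _.
  exact: measurableT_comp g_meas (measurable_addr _ _).
- by move=> x; apply: prodr_ge0 => j _; case/andP: (g_01 (x + (d * j)%:R * mu)).
- by move=> x; apply: eq_bigr => j _; rewrite addrAC g_per.
- move=> s; rewrite mulr_ge0 ?divr_ge0 ?pi_ge0 //=.
  rewrite /mu mulrCA gtr_pMr ?pi_gt0 // ltr_pdivrMr ?ltr0n // mul1r ltr_nat.
  exact: leq_trans (ltn_ord s) d_le_n.
Qed.
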